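(* Let $n\ge 3$ be an integer. Let $F_k$ be the Fibonacci numbers ($F_0=0$, $F_1=1$, $F_{k+2}=F_k+F_{k+1}$) and $L_k$ the Lucas numbers ($L_1=1$, $L_2=3$, $L_{k+2}=L_k+L_{k+1}$). Set $d=\gcd(F_{n-2}+1,F_{n-1}-1)$, $\mu=(F_{n-1}-1)/d$, $\nu=(F_{n-2}+1)/d$ and $t=(L_n-1-(-1)^n)/d$. For given $r,s$ put $h=-(s\mu+r\nu)d$. Then: (i) if $n\equiv 0\pmod 4$: $d=F_{n/2}$, $t=5F_{n/2}$, and for $r=F_{n/2-1}$, $s=-F_{n/2-2}$ one has $r\mu+s(\mu+\nu)=1$ and $h=-2F_{n/2}$; (ii) if $n\equiv 2\pmod 4$: $d=L_{n/2}$, $t=L_{n/2}$, and for $r=F_{n/2-2}$, $s=-F_{n/2-3}$ one has $r\mu+s(\mu+\nu)=1$ and $h=-L_{n/2}$; (iii) if $n\equiv 1,5,7,$ or $11\pmod{12}$: $d=1$, $t=L_n$, and for $r=(F_{n-2}-1)/2$, $s=(1-F_{n-3})/2$ (rational numbers) one has $r\mu+s(\mu+\nu)=1$ and $h=(1-L_{n-2})/2$; (iv) if $n\equiv 3$ or $9\pmod{12}$: $d=2$, $t=L_n/2$, and for $r=F_{n-2}-1$, $s=1-F_{n-3}$ one has $r\mu+s(\mu+\nu)=1$ and $h=1-L_{n-2}$. *)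

From mathcomp Require Import all_boot all_order all_algebra.
Set Implicit Arguments. Unset Strict Implicit. Unset Printing Implicit Defensive.
Import Order.TTheory GRing.Theory Num.Theory.

Fixpoint fib (k : nat) : nat :=
  match k with
  | 0 => 0
  | 1 => 1
  | (k'.+1 as k1).+1 => fib k' + fib k1
  end.

Fixpoint lucas (k : nat) : nat :=
  match k with
  | 0 => 2
  | 1 => 1
  | (k'.+1 as k1).+1 => lucas k' + lucas k1
  end.

Local Open Scope ring_scope.

(* d = gcd(F_{n-2}+1, F_{n-1}-1)  (for n >= 3, F_{n-1} >= 1 so the nat
   subtraction is exact). *)
Definition dd (n : nat) : nat := gcdn (fib (n - 2)).+1 (fib (n - 1)).-1.

Definition mu (n : nat) : rat := ((fib (n - 1))%:R - 1) / (dd n)%:R.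
Definition nu (n : nat) : rat := ((fib (n - 2))%:R + 1) / (dd n)%:R.
Definition tt_ (n : nat) : rat :=
  ((lucas n)%:R - 1 - (-1) ^+ n) / (dd n)%:R.
Definition hh (n : nat) (r s : rat) : rat :=
  - (s * mu n + r * nu n) * (dd n)%:R.

From mathcomp Require Import all_boot all_order all_algebra.
From mathcomp Require Import ring lra zify.
Import Order.TTheory GRing.Theory Num.Theory.
Set Implicit Arguments. Unset Strict Implicit. Unset Printing Implicit Defensive.
Local Open Scope ring_scope.

(* Everything reduces to identities between Fibonacci and Lucas numbers that follow
   from d'Ocagne's identity F_{b+1} G_{b+j} - F_b G_{b+j+1} = (-1)^b G_j, valid for any
   sequence G with the Fibonacci recurrence, and from the addition formula
   G_{m+n+1} = F_{m+1} G_{n+1} + F_m G_n.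
   For n = 2h one has F_{n-2} + 1 = F_h L_{h-2} and F_{n-1} - 1 = F_h L_{h-1} when h is
   even, and F_{n-2} + 1 = L_h F_{h-2}, F_{n-1} - 1 = L_h F_{h-1} when h is odd.  The
   cofactors are consecutive terms of a Fibonacci-like sequence, so d'Ocagne's identity
   is a Bezout relation between them (it is the claim r mu + s (mu + nu) = 1), and the
   common factor is the gcd; t then comes from L_{2h} - 2 = 5 F_h^2, resp. L_h^2.
   For odd n an integer combination of F_{n-2} + 1 and F_{n-1} - 1 equals 2, so the gcd
   is 1 or 2; it is 2 exactly when both are even, i.e. when 3 | n, as F_k is even iff
   3 | k. *)


Lemma fib_gt0 k : (0 < fib k.+1)%N.
Proof. by elim: k => // k IH; apply: ltn_addl. Qed.

Lemma lucas_gt0 k : (0 < lucas k)%N.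
Proof. by elim: k => [|[|k] IH] //; apply: ltn_addl. Qed.

Lemma odd_fib k : odd (fib k) = (k %% 3 != 0)%N.
Proof.
elim: k {-2}k (leqnn k) => [|k IH] [|[|[|j]]] // le_jk.
have -> : fib j.+3 = (fib j + (fib j.+1).*2)%N by rewrite /= -addnn; lia.
by rewrite oddD odd_double addbF IH //; lia.
Qed.

Lemma gcdn_dvd_lincomb (a b c : nat) (u v : int) :
  u * a%:R + v * b%:R = c%:R -> (gcdn a b %| c)%N.
Proof.
move=> uv_c; suff : ((gcdn a b)%:Z %| c%:R)%Z by rewrite natz dvdzE.
by rewrite -uv_c rpredD // dvdz_mull // natz dvdzE /= ?dvdn_gcdl ?dvdn_gcdr.
Qed.

Lemma coprime_bezout (a b : nat) (u v : int) :
  u * a%:R + v * b%:R = 1 -> coprime a b.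
Proof. by move/(@gcdn_dvd_lincomb a b 1 u v); rewrite dvdn1. Qed.

Lemma signr_even {R : pzRingType} k : ~~ odd k -> (-1) ^+ k = 1 :> R.
Proof. by move/negPf=> ev; rewrite -signr_odd ev. Qed.

Section FibonacciLikeSequences.
Variable R : comNzRingType.

Definition fibonacci_like (G : nat -> R) := forall k, G k.+2 = G k + G k.+1.

Local Notation F k := ((fib k)%:R : R).
Local Notation L k := ((lucas k)%:R : R).

Lemma fibonacci_like_natr (G : nat -> nat) :
  (forall k, G k.+2 = G k + G k.+1)%N -> fibonacci_like (fun k => (G k)%:R).
Proof. by move=> G_rec k; rewrite G_rec natrD. Qed.

Lemma natr_fibSS k : F k.+2 = F k + F k.+1.
Proof. exact: natrD. Qed.

Lemma natr_lucasSS k : L k.+2 = L k + L k.+1.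
Proof. exact: natrD. Qed.

Lemma fibonacci_like_eq (f g : nat -> R) :
  fibonacci_like f -> fibonacci_like g -> f 0 = g 0 -> f 1 = g 1 -> f =1 g.
Proof.
move=> f_rec g_rec f0 f1 k.
suff [] : f k = g k /\ f k.+1 = g k.+1 by [].
by elim: k => [|k [IH1 IH2]]; split; rewrite // f_rec g_rec IH1 IH2.
Qed.

Section OneSequence.
Variable G : nat -> R.
Hypothesis G_rec : fibonacci_like G.

Lemma fib_like_addS m n : G (m + n).+1 = F m.+1 * G n.+1 + F m * G n.
Proof.
move: m; apply: (fibonacci_like_eq (f := fun m => G (m + n).+1)
                                  (g := fun m => F m.+1 * G n.+1 + F m * G n)).
- by move=> m; rewrite !addSn G_rec.
- by move=> m /=; rewrite !natr_fibSS; ring.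
- by rewrite add0n /= mul1r mul0r addr0.
- by rewrite add1n G_rec natr_fibSS /=; ring.
Qed.

Lemma fib_like_dOcagne b j :
  F b.+1 * G (b + j) - F b * G (b + j).+1 = (-1) ^+ b * G j.
Proof.
elim: b => [|b IH]; first by rewrite add0n /=; ring.
by rewrite exprS -mulrA -IH addSn natr_fibSS G_rec; ring.
Qed.

Lemma fib_like_bezout b j :
  F b.+1 * G (b + j).+1 - F b * (G (b + j).+1 + G (b + j)) = (-1) ^+ b * G j.+1.
Proof. by rewrite [G _ + _]addrC -G_rec -addnS fib_like_dOcagne. Qed.

End OneSequence.

Lemma fib_addS m n : F (m + n).+1 = F m.+1 * F n.+1 + F m * F n.
Proof. exact: fib_like_addS natr_fibSS m n. Qed.

Lemma lucas_addS m n : L (m + n).+1 = F m.+1 * L n.+1 + F m * L n.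
Proof. exact: fib_like_addS natr_lucasSS m n. Qed.

Lemma lucasE k : L k = 2 * F k.+1 - F k.
Proof.
apply: (fibonacci_like_eq (f := fun k => L k) (g := fun k => 2 * F k.+1 - F k)) k => //=.
- exact: natr_lucasSS.
- by move=> k /=; rewrite !natr_fibSS; ring.
- by ring.
- by ring.
Qed.

Lemma fib_cassini b : F b.+1 ^+ 2 - F b * F b.+2 = (-1) ^+ b.
Proof. by have := fib_like_dOcagne natr_fibSS b 1; rewrite addn1 expr2 /= mulr1. Qed.

Lemma fibS_mul_lucas b : F b.+1 * L b = F (b + b).+1 + (-1) ^+ b.
Proof. by rewrite fib_addS lucasE -fib_cassini !natr_fibSS; ring. Qed.

Lemma fibSS_mul_lucas b : F b.+2 * L b = F (b + b).+2 + (-1) ^+ b.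
Proof. by rewrite -(addSn b b) fib_addS lucasE -fib_cassini !natr_fibSS; ring. Qed.

Lemma fib_mul_lucasS b : F b * L b.+1 = F (b + b).+1 - (-1) ^+ b.
Proof. by rewrite fib_addS lucasE -fib_cassini !natr_fibSS; ring. Qed.

Lemma fib_mul_lucasSS b : F b * L b.+2 = F (b + b).+2 - (-1) ^+ b.
Proof. by rewrite -(addSn b b) fib_addS lucasE -fib_cassini !natr_fibSS; ring. Qed.

Lemma lucas_double b : L (b + b) = L b ^+ 2 - 2 * (-1) ^+ b.
Proof.
case: b => [|b]; first by rewrite /=; ring.
by rewrite addnS lucas_addS !lucasE exprS -fib_cassini !natr_fibSS; ring.
Qed.

Lemma lucas_double_fib b : L (b + b) = 5 * F b ^+ 2 + 2 * (-1) ^+ b.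
Proof. by rewrite lucas_double lucasE -fib_cassini !natr_fibSS; ring. Qed.

Lemma fib_succ_pred_bezout b :
  (F b.+1 - 1) * (F b.+2 - 1) + (1 - F b) * ((F b.+2 - 1) + (F b.+1 + 1))
  = 1 + (-1) ^+ b.
Proof. by rewrite -fib_cassini !natr_fibSS; ring. Qed.

Lemma fib_succ_pred_lucas b :
  (1 - F b) * (F b.+2 - 1) + (F b.+1 - 1) * (F b.+1 + 1)
  = L b.+1 - 2 + (-1) ^+ b.
Proof. by rewrite lucasE -fib_cassini !natr_fibSS; ring. Qed.

End FibonacciLikeSequences.

Lemma dd_mu_nu_cofactors k D x y :
  (fib k).+1 = (y * D)%N -> fib k.+1 = (x * D).+1 -> coprime y x ->
  [/\ dd k.+2 = D, mu k.+2 = x%:R & nu k.+2 = y%:R].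
Proof.
move=> Ha Hb coprime_yx.
have ddE : dd k.+2 = D by rewrite /dd !subSS !subn0 Ha Hb -muln_gcdl (eqP coprime_yx) mul1n.
have D_neq0 : D%:R != 0 :> rat.
  by rewrite pnatr_eq0; apply: contraPneq Ha => ->; rewrite muln0.
split; rewrite // /mu /nu ddE !subSS !subn0.
  by rewrite Hb -natr1 addrK natrM mulfK.
by rewrite natr1 Ha natrM mulfK.
Qed.

Lemma fibonacci_like_cofactor_claims (G : nat -> nat) k b j D :
  (forall i, G i.+2 = G i + G i.+1)%N -> G j.+1 = 1%N -> ~~ odd b ->
  (fib k).+1 = (G (b + j) * D)%N -> fib k.+1 = (G (b + j).+1 * D).+1 ->
  let r : rat := (fib b.+1)%:R in let s : rat := - (fib b)%:R in
  [/\ dd k.+2 = D, r * mu k.+2 + s * (mu k.+2 + nu k.+2) = 1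
    & hh k.+2 r s = - (G j)%:R * D%:R].
Proof.
move=> G_rec G1 even_b Ha Hb r s.
have G_like (R : comNzRingType) := fibonacci_like_natr R G_rec.
have bezout (R : comNzRingType) :
    (fib b.+1)%:R * (G (b + j).+1)%:R
      - (fib b)%:R * ((G (b + j).+1)%:R + (G (b + j))%:R) = 1 :> R.
  by move: (fib_like_bezout (G_like R) b j) => /= ->; rewrite signr_even // G1 mul1r.
have coprime_G : coprime (G (b + j)) (G (b + j).+1).
  apply: (@coprime_bezout _ _ (- (fib b)%:R) ((fib b.+1)%:R - (fib b)%:R)).
  by rewrite -[RHS](bezout int); ring.
have [ddE muE nuE] := dd_mu_nu_cofactors Ha Hb coprime_G.
split=> //; first by rewrite /r /s muE nuE mulNr bezout.
have := fib_like_dOcagne (G_like rat) b j; rewrite signr_even // mul1r => <-.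
by rewrite /hh /r /s muE nuE ddE; ring.
Qed.

Lemma dd_odd b : ~~ odd b -> dd b.+3 = (if (3 %| b.+3)%N then 2 else 1)%N.
Proof.
move=> even_b; rewrite /dd !subSS !subn0.
have fib_pos := fib_gt0 b.+1.
have dvd2 : (gcdn (fib b.+1).+1 (fib b.+2).-1 %| 2)%N.
  apply: (@gcdn_dvd_lincomb _ _ _ (1 - (fib b)%:R) ((fib b.+1)%:R - (fib b)%:R)).
  have := fib_succ_pred_bezout int b; rewrite signr_even // => bezout.
  by rewrite -natr1 -subn1 natrB // -[RHS]bezout; ring.
have even_gcd : (2 %| gcdn (fib b.+1).+1 (fib b.+2).-1)%N = (3 %| b.+3)%N.
  have odd_pred : odd (fib b.+2).-1 = ~~ odd (fib b.+2) by rewrite -{2}(prednK fib_pos) oddS negbK.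
  rewrite dvdn_gcd !dvdn2 odd_pred oddS !negbK !odd_fib.
  by apply/idP/idP; lia.
have le2 := dvdn_leq (isT : (0 < 2)%N) dvd2.
have gcd_neq0 : gcdn (fib b.+1).+1 (fib b.+2).-1 != 0%N by apply: contraTneq dvd2 => ->.
move: (gcdn _ _) even_gcd le2 gcd_neq0 => g.
by case: ifP => _ even_g le2 g_neq0; lia.
Qed.

Lemma proposition2p3p1_0mod4 b : ~~ odd b ->
  let n := (b.+2 + b.+2)%N in
  let r : rat := (fib b.+1)%:R in
  let s : rat := - (fib b)%:R in
  [/\ dd n = fib b.+2, tt_ n = 5 * (fib b.+2)%:R,
      r * mu n + s * (mu n + nu n) = 1
    & hh n r s = - 2 * (fib b.+2)%:R].
Proof.
move=> even_b; cbv zeta.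
have even_bSS : ~~ odd b.+2 by rewrite !oddS negbK.
have Ha : (fib (b + b).+2).+1 = (lucas (b + 0) * fib b.+2)%N.
  apply/eqP; rewrite addn0 -(eqr_nat int) -natr1 natrM mulrC.
  by rewrite fibSS_mul_lucas signr_even.
have Hb : fib (b + b).+3 = (lucas (b + 0).+1 * fib b.+2).+1.
  apply/eqP; rewrite addn0 -(eqr_nat int) -natr1 natrM mulrC.
  by rewrite fibS_mul_lucas addSn addnS exprS signr_even // mulr1 subrK.
have := @fibonacci_like_cofactor_claims lucas _ b 0 _ (fun=> erefl) erefl even_b Ha Hb.
rewrite (_ : (b + b).+4 = b.+2 + b.+2)%N; last by rewrite !addSn !addnS.
case=> dd_n bezout hh_n.
split=> //.
have F_neq0 : (fib b.+2)%:R != 0 :> rat by rewrite pnatr_eq0 -lt0n fib_gt0.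
have even_n : ~~ odd (b.+2 + b.+2) by rewrite addnn odd_double.
rewrite /tt_ dd_n lucas_double_fib (signr_even even_bSS) (signr_even even_n).
by apply: (mulIf F_neq0); rewrite divfK //; ring.
Qed.

Lemma proposition2p3p1_2mod4 b : ~~ odd b ->
  let n := (b.+3 + b.+3)%N in
  let r : rat := (fib b.+1)%:R in
  let s : rat := - (fib b)%:R in
  [/\ dd n = lucas b.+3, tt_ n = (lucas b.+3)%:R,
      r * mu n + s * (mu n + nu n) = 1
    & hh n r s = - (lucas b.+3)%:R].
Proof.
move=> even_b; cbv zeta.
have even_bSS : ~~ odd b.+2 by rewrite !oddS negbK.
have Ha : (fib (b.+1 + b.+1).+2).+1 = (fib (b + 1) * lucas b.+3)%N.
  apply/eqP; rewrite addn1 -(eqr_nat int) -natr1 natrM.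
  by rewrite fib_mul_lucasSS exprS signr_even // mulr1 opprK.
have Hb : fib (b.+1 + b.+1).+3 = (fib (b + 1).+1 * lucas b.+3).+1.
  apply/eqP; rewrite addn1 -(eqr_nat int) -natr1 natrM.
  by rewrite fib_mul_lucasS !addSn !addnS signr_even // subrK.
have := @fibonacci_like_cofactor_claims fib _ b 1 _ (fun=> erefl) erefl even_b Ha Hb.
rewrite (_ : (b.+1 + b.+1).+4 = b.+3 + b.+3)%N; last by rewrite !addSn !addnS.
case=> dd_n bezout hh_n.
split=> //; last by rewrite hh_n mulN1r.
have L_neq0 : (lucas b.+3)%:R != 0 :> rat by rewrite pnatr_eq0 -lt0n lucas_gt0.
have odd_bSSS : odd b.+3 by rewrite !oddS negbK.
have even_n : ~~ odd (b.+3 + b.+3) by rewrite addnn odd_double.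
rewrite /tt_ dd_n lucas_double -(signr_odd _ b.+3) odd_bSSS (signr_even even_n).
by apply: (mulIf L_neq0); rewrite divfK //; ring.
Qed.

Lemma proposition2p3p1_odd_ndvd3 b : ~~ odd b -> ~~ (3 %| b.+3)%N ->
  let n := b.+3 in
  let r : rat := ((fib b.+1)%:R - 1) / 2 in
  let s : rat := (1 - (fib b)%:R) / 2 in
  [/\ dd n = 1%N, tt_ n = (lucas n)%:R,
      r * mu n + s * (mu n + nu n) = 1
    & hh n r s = (1 - (lucas b.+1)%:R) / 2].
Proof.
move=> even_b ndvd3; cbv zeta.
have dd_n : dd b.+3 = 1%N by rewrite dd_odd // (negPf ndvd3).
have bezout := fib_succ_pred_bezout rat b.
have hh_id := fib_succ_pred_lucas rat b.
rewrite signr_even // in bezout hh_id.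
have muE : mu b.+3 = (fib b.+2)%:R - 1 by rewrite /mu dd_n divr1.
have nuE : nu b.+3 = (fib b.+1)%:R + 1 by rewrite /nu dd_n divr1.
have odd_n : odd b.+3 by rewrite !oddS negbK.
split=> //.
- by rewrite /tt_ dd_n divr1 -signr_odd odd_n expr1 opprK subrK.
- by rewrite muE nuE; lra.
- by rewrite /hh muE nuE dd_n; lra.
Qed.

Lemma proposition2p3p1_odd_dvd3 b : ~~ odd b -> (3 %| b.+3)%N ->
  let n := b.+3 in
  let r : rat := (fib b.+1)%:R - 1 in
  let s : rat := 1 - (fib b)%:R in
  [/\ dd n = 2%N, tt_ n = (lucas n)%:R / 2,
      r * mu n + s * (mu n + nu n) = 1
    & hh n r s = 1 - (lucas b.+1)%:R].
Proof.
move=> even_b dvd3; cbv zeta.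
have dd_n : dd b.+3 = 2%N by rewrite dd_odd // dvd3.
have bezout := fib_succ_pred_bezout rat b.
have hh_id := fib_succ_pred_lucas rat b.
rewrite signr_even // in bezout hh_id.
have muE : mu b.+3 = ((fib b.+2)%:R - 1) / 2 by rewrite /mu dd_n.
have nuE : nu b.+3 = ((fib b.+1)%:R + 1) / 2 by rewrite /nu dd_n.
have odd_n : odd b.+3 by rewrite !oddS negbK.
split=> //.
- by rewrite /tt_ dd_n -signr_odd odd_n expr1 opprK subrK.
- by rewrite muE nuE; lra.
- by rewrite /hh muE nuE dd_n; lra.
Qed.

Theorem proposition2p3p1 (n : nat) (hn : (3 <= n)%N) :
  [/\ (n %% 4 = 0)%N ->
        let r : rat := (fib (n %/ 2 - 1))%:R in
        let s : rat := - (fib (n %/ 2 - 2))%:R in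
        [/\ dd n = fib (n %/ 2), tt_ n = 5 * (fib (n %/ 2))%:R,
            r * mu n + s * (mu n + nu n) = 1
          & hh n r s = - 2 * (fib (n %/ 2))%:R],
      (n %% 4 = 2)%N ->
        let r : rat := (fib (n %/ 2 - 2))%:R in
        let s : rat := - (fib (n %/ 2 - 3))%:R in
        [/\ dd n = lucas (n %/ 2), tt_ n = (lucas (n %/ 2))%:R,
            r * mu n + s * (mu n + nu n) = 1
          & hh n r s = - (lucas (n %/ 2))%:R],
      (n %% 12 \in [:: 1; 5; 7; 11])%N ->
        let r : rat := ((fib (n - 2))%:R - 1) / 2 in
        let s : rat := (1 - (fib (n - 3))%:R) / 2 in
        [/\ dd n = 1%N, tt_ n = (lucas n)%:R,
            r * mu n + s * (mu n + nu n) = 1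
          & hh n r s = (1 - (lucas (n - 2))%:R) / 2]
    & (n %% 12 \in [:: 3; 9])%N ->
        let r : rat := (fib (n - 2))%:R - 1 in
        let s : rat := 1 - (fib (n - 3))%:R in
        [/\ dd n = 2%N, tt_ n = (lucas n)%:R / 2,
            r * mu n + s * (mu n + nu n) = 1
          & hh n r s = 1 - (lucas (n - 2))%:R]].
Proof.
split=> [n_mod4 | n_mod4 | /[!inE] n_mod12 | /[!inE] n_mod12].
- have [b even_b ->] : exists2 b, ~~ odd b & n = (b.+2 + b.+2)%N.
    by exists (n %/ 2 - 2)%N; lia.
  rewrite (_ : (b.+2 + b.+2) %/ 2 = b.+2)%N; last lia.
  by rewrite !subSS !subn0; apply: proposition2p3p1_0mod4.
- have [b even_b ->] : exists2 b, ~~ odd b & n = (b.+3 + b.+3)%N.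
    by exists (n %/ 2 - 3)%N; lia.
  rewrite (_ : (b.+3 + b.+3) %/ 2 = b.+3)%N; last lia.
  by rewrite !subSS !subn0; apply: proposition2p3p1_2mod4.
- have [b even_b n_eq] : exists2 b, ~~ odd b & n = b.+3 by exists (n - 3)%N; lia.
  by subst n; rewrite !subSS !subn0; apply: proposition2p3p1_odd_ndvd3 => //; lia.
- have [b even_b n_eq] : exists2 b, ~~ odd b & n = b.+3 by exists (n - 3)%N; lia.
  by subst n; rewrite !subSS !subn0; apply: proposition2p3p1_odd_dvd3 => //; lia.
Qed.
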